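(* For the generalized coin-tossing process with $p=\tfrac12$ (fair coins) and OPs of length $m=3$, $\mathbf p=(\tfrac14,\tfrac18,\tfrac18,\tfrac18,\tfrac18,\tfrac14)^\top$ and $$\Sigma=\frac1{64}\begin{pmatrix}20&-2&-2&-2&-2&-12\\-2&5&1&-3&1&-2\\-2&1&5&1&-3&-2\\-2&-3&1&5&1&-2\\-2&1&-3&1&5&-2\\-12&-2&-2&-2&-2&20\end{pmatrix}.$$
   Context: Generalized coin-tossing (GCT) process with parameter $p\in(0,1)$, $q=1-p$: a random strict total order on objects $(X_t)_{t\in\mathbb Z}$ defined from mutually independent Bernoulli variables $\xi_{s,t}$, $s<t$, with $\mathbb P(\xi_{s,t}=1)=p$, recursively in $t-s$: if $t-s=1$, $X_s<X_t$ iff $\xi_{s,t}=1$; if $t-s\ge2$ and there is $r\in(s,t)$ with $X_s<X_r<X_t$ then $X_s<X_t$; if there is $r\in(s,t)$ with $X_s>X_r>X_t$ then $X_s>X_t$; otherwise $X_s<X_t$ iff $\xi_{s,t}=1$. $\Pi_t$ is the permutation in $S_3$ giving the ranks of $(X_t,X_{t+1},X_{t+2})$; OPs in lexicographic order are $\pi_1=(1,2,3)$, $\pi_2=(1,3,2)$, $\pi_3=(2,1,3)$, $\pi_4=(2,3,1)$, $\pi_5=(3,1,2)$, $\pi_6=(3,2,1)$. $p_i=\mathbb P(\Pi_0=\pi_i)$, $p_{ij}(k)=\mathbb P(\Pi_0=\pi_i,\Pi_k=\pi_j)$, $\Sigma=(\sigma_{ij})$ with $\sigma_{ij}=p_i(\delta_{ij}-p_j)+\sum_{k=1}^\infty\big(p_{ij}(k)+p_{ji}(k)-2p_ip_j\big)$.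 *)

From HB Require Import structures.
From mathcomp Require Import all_boot all_order all_algebra.
From mathcomp Require Import all_classical all_reals all_analysis.

Set Implicit Arguments.
Unset Strict Implicit.
Unset Printing Implicit Defensive.

Import Order.TTheory GRing.Theory Num.Theory numFieldNormedType.Exports.
Local Open Scope classical_set_scope.
Local Open Scope ring_scope.

(* The GCT order, computed from the coins xi s t (meaningful for s < t). *)
(* gct_up xi n s d  ==  "X_s < X_{s+d}"  (fuel n, valid whenever d <= n). *)
Fixpoint gct_up (xi : nat -> nat -> bool) (n s d : nat) : bool :=
  match n with
  | 0 => false
  | n'.+1 =>
    if d == 1%N then xi s s.+1 else
    if has (fun r => gct_up xi n' s r && gct_up xi n' (s + r) (d - r))
           (iota 1 d.-1) then true
    else if has (fun r => ~~ gct_up xi n' s r && ~~ gct_up xi n' (s + r) (d - r))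
           (iota 1 d.-1) then false
    else xi s (s + d)
  end.

Definition gct_lt (xi : nat -> nat -> bool) (a b : nat) : bool :=
  if (a < b)%N then gct_up xi (b - a) a (b - a)
  else if (b < a)%N then ~~ gct_up xi (a - b) b (a - b)
  else false.

(* rank (1-based) of X_{t+i} among X_t, X_{t+1}, X_{t+2} *)
Definition gct_rank (xi : nat -> nat -> bool) (t i : nat) : nat :=
  (count (fun j => gct_lt xi (t + j) (t + i)) (iota 0 3)).+1.

(* Pi_t as the sequence of ranks of (X_t, X_{t+1}, X_{t+2}) *)
Definition gct_Pi (xi : nat -> nat -> bool) (t : nat) : seq nat :=
  [seq gct_rank xi t i | i <- iota 0 3].

(* the ordinal patterns pi_1, ..., pi_6 in lexicographic order (index 0..5) *)
Definition op_list : seq (seq nat) :=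
  [:: [:: 1; 2; 3]; [:: 1; 3; 2]; [:: 2; 1; 3];
      [:: 2; 3; 1]; [:: 3; 1; 2]; [:: 3; 2; 1]]%N.
Definition op (i : 'I_6) : seq nat := nth [::] op_list i.

(* Coins in the window {0,...,N-1}: one Bernoulli variable per pair s<t. *)
Definition wpair (N : nat) := {x : 'I_N * 'I_N | (x.1 < x.2)%N}.

Definition xi_of (N : nat) (w : {ffun wpair N -> bool}) : nat -> nat -> bool :=
  fun s t =>
    match (insub s : option 'I_N), (insub t : option 'I_N) with
    | Some a, Some b =>
        match (insub (a, b) : option (wpair N)) with
        | Some e => w e
        | None => false
        end
    | _, _ => false
    end.

Definition gct_weight (R : realType) (p : R) (N : nat)
  (w : {ffun wpair N -> bool}) : R :=
  \prod_(e : wpair N) (if w e then p else 1 - p).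
Arguments gct_weight {R} p N w.

Definition gct_prob (R : realType) (p : R) (N : nat)
  (E : pred {ffun wpair N -> bool}) : R :=
  \sum_(w | E w) gct_weight p N w.
Arguments gct_prob {R} p N E.

(* p_i = P(Pi_0 = pi_i): depends only on coins in window {0,1,2} *)
Definition gct_p (R : realType) (p : R) (i : 'I_6) : R :=
  gct_prob p 3 (fun w => gct_Pi (xi_of w) 0 == op i).

(* p_ij(k) = P(Pi_0 = pi_i, Pi_k = pi_j): depends only on coins in {0..k+2} *)
Definition gct_pk (R : realType) (p : R) (i j : 'I_6) (k : nat) : R :=
  gct_prob p (k + 3)
    (fun w => (gct_Pi (xi_of w) 0 == op i) && (gct_Pi (xi_of w) k == op j)).

Definition gct_term (R : realType) (p : R) (i j : 'I_6) (k : nat) : R :=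
  gct_pk p i j k + gct_pk p j i k - 2 * gct_p p i * gct_p p j.

Definition gct_partial (R : realType) (p : R) (i j : 'I_6) (n : nat) : R :=
  \sum_(1 <= k < n) gct_term p i j k.

Definition gct_Sigma (R : realType) (p : R) (i j : 'I_6) : R :=
  gct_p p i * ((i == j)%:R - gct_p p j) + lim (gct_partial p i j @ \oo).

Definition p_claim : seq int := [:: 16; 8; 8; 8; 8; 16]%Z. (* times 1/64 *)
Definition Sigma_claim : seq (seq int) :=
  [:: [:: 20; -2; -2; -2; -2; -12];
      [:: -2;  5;  1; -3;  1;  -2];
      [:: -2;  1;  5;  1; -3;  -2];
      [:: -2; -3;  1;  5;  1;  -2];
      [:: -2;  1; -3;  1;  5;  -2];
      [:: -12; -2; -2; -2; -2; 20]]%Z.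

From HB Require Import structures.
From mathcomp Require Import all_boot all_order all_algebra.
From mathcomp Require Import all_classical all_reals all_analysis.
From mathcomp Require Import ring lra zify.
Import Order.TTheory GRing.Theory Num.Theory numFieldNormedType.Exports.
Local Open Scope classical_set_scope.
Local Open Scope ring_scope.

(* The recursive definition of the order is translation invariant, so Pi_k is a
   fixed function of the three coins xi(k,k+1), xi(k+1,k+2), xi(k,k+2).  Hence
   Pi_0 and Pi_k are independent for k >= 2, all terms of the series defining
   Sigma vanish except k = 1, and for fair coins every probability involved is
   a count of boolean words of length at most 6 divided by a power of 2. *)

Lemma gct_up_shift xi n k s d :
  gct_up xi n (k + s) d = gct_up (fun a b => xi (k + a)%N (k + b)%N) n s d.
Proof.
elim: n s d => [//|n IH] s d /=.
rewrite addnS; case: (d == 1)%N => //.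
rewrite (eq_has (a2 := fun r => gct_up (fun a b => xi (k + a)%N (k + b)%N) n s r &&
   gct_up (fun a b => xi (k + a)%N (k + b)%N) n (s + r) (d - r)));
  last by move=> r /=; rewrite IH -addnA IH.
rewrite (eq_has (a1 := fun r => ~~ gct_up xi n (k + s) r && ~~ gct_up xi n (k + s + r) (d - r))
  (a2 := fun r => ~~ gct_up (fun a b => xi (k + a)%N (k + b)%N) n s r &&
   ~~ gct_up (fun a b => xi (k + a)%N (k + b)%N) n (s + r) (d - r)));
  last by move=> r /=; rewrite IH -addnA IH.
by rewrite addnA.
Qed.

Lemma gct_lt_shift xi k a b :
  gct_lt xi (k + a) (k + b) = gct_lt (fun a b => xi (k + a)%N (k + b)%N) a b.
Proof. by rewrite /gct_lt !ltn_add2l !subnDl !gct_up_shift. Qed.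

Definition pattern3 (b01 b12 b02 : bool) : seq nat :=
  gct_Pi (fun s t => if (s == 0)%N && (t == 1)%N then b01
                     else if (s == 1)%N && (t == 2)%N then b12 else b02) 0.

Lemma gct_Pi0_pattern3 xi : gct_Pi xi 0 = pattern3 (xi 0%N 1%N) (xi 1%N 2%N) (xi 0%N 2%N).
Proof.
rewrite /pattern3 /gct_Pi /gct_rank /gct_lt /=.
by case: (xi 0%N 1%N); case: (xi 1%N 2%N); case: (xi 0%N 2%N).
Qed.

Lemma gct_Pi_pattern3 xi k :
  gct_Pi xi k = pattern3 (xi k k.+1) (xi k.+1 k.+2) (xi k k.+2).
Proof.
have -> : gct_Pi xi k = gct_Pi (fun a b => xi (k + a)%N (k + b)%N) 0.
  rewrite /gct_Pi /gct_rank; apply: eq_map => i; congr S; apply: eq_count => j.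
  by rewrite gct_lt_shift !add0n.
by rewrite gct_Pi0_pattern3 addn0 addn1 addn2.
Qed.

Section CountingCoins.
Local Open Scope nat_scope.

Fixpoint bool_seqs n : seq (seq bool) :=
  if n is n'.+1 then map (cons true) (bool_seqs n') ++ map (cons false) (bool_seqs n')
  else [:: [::]].

Lemma count_bool_seqs_take_drop m n (P Q : pred (seq bool)) :
  count (fun l => P (take m l) && Q (drop m l)) (bool_seqs (m + n))
  = count P (bool_seqs m) * count Q (bool_seqs n).
Proof.
elim: m P => [|m IH] P /=.
  rewrite add0n addn0; under eq_count => l do rewrite take0 drop0.
  by case: (P [::]); rewrite ?mul1n ?mul0n ?count_pred0.
rewrite !count_cat !count_map mulnDl.
by rewrite -(IH (fun l => P (true :: l))) -(IH (fun l => P (false :: l))).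
Qed.

Variable T : finType.

Definition flip_coin (x : T) (w : {ffun T -> bool}) : {ffun T -> bool} :=
  [ffun e => if e == x then ~~ w e else w e].

Lemma flip_coinK x : involutive (flip_coin x).
Proof. by move=> w; apply/ffunP => e; rewrite !ffunE; case: eqP => // _; rewrite negbK. Qed.

(* Flipping the coin x is a bijection exchanging the two values of w x and
   preserving every event that only looks at the coins of s. *)
Lemma card_coin_fixed (x : T) (s : seq T) (Q : pred (seq bool)) b : x \notin s ->
  \sum_(w : {ffun T -> bool} | Q (map w s)) 1 =
  2 * \sum_(w : {ffun T -> bool} | (w x == b) && Q (map w s)) 1.
Proof.
move=> xs; rewrite (bigID (fun w : {ffun T -> bool} => w x == b)) /=.
have flip_map w : map (flip_coin x w) s = map w s.
  by apply/eq_in_map => e he; rewrite ffunE; case: eqP => // exe; rewrite -exe he in xs.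
rewrite [X in _ + X](reindex_inj (inv_inj (flip_coinK x))) /=.
rewrite [X in _ + X](eq_bigl (fun w : {ffun T -> bool} => Q (map w s) && (w x == b)));
  last by move=> w; rewrite flip_map ffunE eqxx; case: (w x); case: b.
by rewrite addnn -mul2n; congr (_ * _); apply: eq_bigl => w; rewrite andbC.
Qed.

Lemma card_coins_event (s : seq T) (P : pred (seq bool)) : uniq s ->
  (\sum_(w : {ffun T -> bool} | P (map w s)) 1) * 2 ^ size s
  = count P (bool_seqs (size s)) * 2 ^ #|T|.
Proof.
elim: s P => [|x s IH] P /=.
  move=> _; rewrite muln1 addn0; case: (P [::]); last by rewrite big_pred0.
  by rewrite sum1_card card_ffun card_bool mul1n.
case/andP => xs us.
rewrite (bigID (fun w : {ffun T -> bool} => w x)) /=.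
rewrite (eq_bigl (fun w : {ffun T -> bool} => (w x == true) && P (true :: map w s)));
  last by move=> w; case: (w x); rewrite ?andbT ?andbF.
rewrite [X in (_ + X) * _](eq_bigl (fun w : {ffun T -> bool} =>
  (w x == false) && P (false :: map w s))); last by move=> w; case: (w x); rewrite ?andbT ?andbF.
rewrite expnS mulnDl !mulnA ![_ * 2]mulnC.
rewrite -(@card_coin_fixed x s (fun l => P (true :: l)) true xs).
rewrite -(@card_coin_fixed x s (fun l => P (false :: l)) false xs).
by rewrite (IH (fun l => P (true :: l))) // (IH (fun l => P (false :: l))) // count_cat !count_map mulnDl.
Qed.

End CountingCoins.

Lemma coin_seq_of_pairs N (ps : seq (nat * nat)) :
  all (fun e => (e.1 < e.2 < N)%N) ps ->
  exists s : seq (wpair N),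
    map (fun e : wpair N => (nat_of_ord (sval e).1, nat_of_ord (sval e).2)) s = ps /\
    forall w : {ffun wpair N -> bool}, map w s = [seq xi_of w e.1 e.2 | e <- ps].
Proof.
elim: ps => [|[a b] ps IH] /=; first by exists [::].
case/andP => /andP [hab hbN] /IH [s [Hs Hw]].
have haN : (a < N)%N := ltn_trans hab hbN.
exists (exist _ (Ordinal haN, Ordinal hbN) hab :: s); split; first by rewrite /= Hs.
move=> w /=; rewrite Hw; congr (_ :: _).
rewrite /xi_of; case: insubP => [a' _ Ea|]; last by rewrite haN.
case: insubP => [b' _ Eb|]; last by rewrite hbN.
case: insubP => [e' _ Ee|]; last by rewrite /= Ea Eb hab.
by congr (w _); apply: val_inj; rewrite Ee /=; congr pair; apply: val_inj.
Qed.

Lemma gct_prob_fair (R : realType) N (E : pred {ffun wpair N -> bool}) :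
  gct_prob (1/2 : R) N E = (\sum_(w | E w) 1)%N%:R * (1/2) ^+ #|{: wpair N}|.
Proof.
rewrite /gct_prob /gct_weight (eq_bigr (fun _ => (1/2 : R) ^+ #|{: wpair N}|)).
  by rewrite sumr_const sum1_card mulr_natl.
move=> w _; rewrite (eq_bigr (fun _ => 1/2)) ?prodr_const // => e _.
by case: (w e) => //; lra.
Qed.

Lemma gct_prob_fair_local (R : realType) N (ps : seq (nat * nat)) (P : pred (seq bool))
  (E : pred {ffun wpair N -> bool}) :
  all (fun e => (e.1 < e.2 < N)%N) ps -> uniq ps ->
  (forall w, E w = P [seq xi_of w e.1 e.2 | e <- ps]) ->
  gct_prob (1/2 : R) N E = (count P (bool_seqs (size ps)))%:R / 2 ^+ size ps.
Proof.
move=> /coin_seq_of_pairs [s [Hs Hw]] ups HE.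
have us : uniq s by move: ups; rewrite -Hs => /map_uniq.
have Hsz : size s = size ps by rewrite -Hs size_map.
rewrite gct_prob_fair (eq_bigl (fun w : {ffun wpair N -> bool} => P (map w s)));
  last by move=> w; rewrite HE Hw.
have := card_coins_event _ s P us; rewrite Hsz => /(congr1 (fun n : nat => n%:R : R)).
rewrite !natrM !natrX expr_div_n expr1n => H.
apply/eqP; rewrite mulrA mulr1 eqr_div ?expf_neq0 ?pnatr_eq0 //.
by rewrite H.
Qed.

Definition pattern_of (l : seq bool) : seq nat :=
  pattern3 (nth false l 0) (nth false l 1) (nth false l 2).

Definition n_single (i : nat) : nat :=
  count (fun l => pattern_of l == nth [::] op_list i) (bool_seqs 3).

(* Coins of Pi_0 and Pi_1: xi(0,1), xi(1,2), xi(0,2), xi(2,3), xi(1,3). *)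
Definition n_overlap (i j : nat) : nat :=
  count (fun l => (pattern_of l == nth [::] op_list i) &&
                  (pattern_of [:: nth false l 1; nth false l 3; nth false l 4]
                     == nth [::] op_list j)) (bool_seqs 5).

Lemma gct_p_fair (R : realType) (i : 'I_6) :
  gct_p (1/2 : R) i = (n_single i)%:R / 2 ^+ 3.
Proof.
by rewrite /gct_p (@gct_prob_fair_local R 3 [:: (0, 1); (1, 2); (0, 2)]%N
  (fun l => pattern_of l == op i)).
Qed.

Lemma gct_pk1_fair (R : realType) (i j : 'I_6) :
  gct_pk (1/2 : R) i j 1 = (n_overlap i j)%:R / 2 ^+ 5.
Proof.
by rewrite /gct_pk (@gct_prob_fair_local R (1 + 3)
  [:: (0, 1); (1, 2); (0, 2); (2, 3); (1, 3)]%N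
  (fun l => (pattern_of l == op i) &&
            (pattern_of [:: nth false l 1; nth false l 3; nth false l 4] == op j))).
Qed.

Lemma gct_pk_far_fair (R : realType) (i j : 'I_6) k : (2 <= k)%N ->
  gct_pk (1/2 : R) i j k = (n_single i * n_single j)%:R / 2 ^+ 6.
Proof.
move=> hk; rewrite /gct_pk (@gct_prob_fair_local R (k + 3)
  [:: (0, 1); (1, 2); (0, 2); (k, k.+1); (k.+1, k.+2); (k, k.+2)]%N
  (fun l => (pattern_of (take 3 l) == op i) && (pattern_of (drop 3 l) == op j))).
- by rewrite /n_single -(count_bool_seqs_take_drop 3 3).
- by rewrite /=; lia.
- by rewrite /= !inE !xpair_eqE; lia.
- by move=> w; rewrite /= !gct_Pi_pattern3.
Qed.

Lemma gct_term_far_fair (R : realType) (i j : 'I_6) k : (2 <= k)%N ->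
  gct_term (1/2 : R) i j k = 0.
Proof. by move=> hk; rewrite /gct_term !gct_pk_far_fair // !gct_p_fair !natrM; field. Qed.

Lemma gct_partial_fair_near (R : realType) (i j : 'I_6) :
  \forall n \near \oo, gct_partial (1/2 : R) i j n = gct_term (1/2 : R) i j 1.
Proof.
exists 2%N => // -[|[|n]] // _; rewrite /gct_partial big_nat_recl //.
rewrite big1_seq ?addr0 // => k /andP [_]; rewrite mem_index_iota => /andP [hk _].
exact: gct_term_far_fair.
Qed.

Lemma all_iota_ord {n : nat} {P : pred nat} : all P (iota 0 n) -> forall i : 'I_n, P i.
Proof. by move=> /allP HP i; apply: HP; rewrite mem_iota ltn_ord. Qed.

Lemma p_claim_count : all (fun i => nth 0%Z p_claim i == (8 * n_single i)%N%:Z) (iota 0 6).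
Proof. by vm_compute. Qed.

Lemma Sigma_claim_count : all (fun i => all (fun j =>
    nth 0%Z (nth [::] Sigma_claim i) j ==
    ((8 * n_single i * (i == j) + 2 * (n_overlap i j + n_overlap j i))%N%:Z
     - (3 * n_single i * n_single j)%N%:Z)) (iota 0 6)) (iota 0 6).
Proof. by vm_compute. Qed.

Lemma gct_p_fair_claim (R : realType) (i : 'I_6) :
  gct_p (1/2 : R) i = (nth 0%Z p_claim i)%:~R / 64.
Proof.
rewrite gct_p_fair (eqP (all_iota_ord p_claim_count i)).
by move: (n_single i) => a; rewrite -pmulrn natrM; field.
Qed.

Lemma gct_Sigma_fair_claim (R : realType) (i j : 'I_6) :
  gct_Sigma (1/2 : R) i j = (nth 0%Z (nth [::] Sigma_claim i) j)%:~R / 64.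
Proof.
have /(all_iota_ord (P := fun i : nat => _)) /(_ i) := Sigma_claim_count.
move=> /all_iota_ord /(_ j) /eqP ->.
rewrite /gct_Sigma (norm_lim_near_cst (gct_partial_fair_near R i j)).
rewrite /gct_term !gct_pk1_fair !gct_p_fair.
change (nat_of_ord i == nat_of_ord j) with (i == j).
move: (n_single i) (n_single j) (n_overlap i j) (n_overlap j i) (i == j) => a b c d e.
by rewrite intrB -!pmulrn !natrD !natrM; field.
Qed.

Theorem corollary3p3 (R : realType) :
  (forall i j : 'I_6, cvg (gct_partial (1 / 2 : R) i j @ \oo)) /\
  (\col_(i < 6) gct_p (1 / 2 : R) i
     = \col_(i < 6) ((nth 0%Z p_claim i)%:~R / 64 : R)) /\
  (\matrix_(i < 6, j < 6) gct_Sigma (1 / 2 : R) i j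
     = \matrix_(i < 6, j < 6) ((nth 0%Z (nth [::] Sigma_claim i) j)%:~R / 64 : R)).
Proof.
split; [|split].
- by move=> i j; apply: is_cvg_near_cst; apply: gct_partial_fair_near.
- by apply/matrixP => i j; rewrite !mxE gct_p_fair_claim.
- by apply/matrixP => i j; rewrite !mxE gct_Sigma_fair_claim.
Qed.
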